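(* For every $n\ge 3$, the sun $S_n$ is not $(a,d)$-distance antimagic for any integers $a$ and $d\ge 0$.
   Context: The sun $S_n$ ($n\ge3$) is the graph on $2n$ vertices obtained from a cycle $x_1x_2\cdots x_n x_1$ by attaching a new pendant vertex $y_i$ adjacent only to $x_i$, for each $i=1,\dots,n$. For a graph $G=(V,E)$ with $v=|V|$ and a bijection $f:V\to\{1,\dots,v\}$, the vertex-weight of $x$ is $w(x)=\sum_{y\in N(x)}f(y)$ with $N(x)$ the set of neighbours of $x$. For integers $a$ and $d\ge0$, $f$ is an $(a,d)$-distance antimagic labeling if the multiset of vertex-weights equals $\{a,a+d,\dots,a+(v-1)d\}$; $G$ is $(a,d)$-distance antimagic if it admits such a labeling. *)

From HB Require Import structures.
From mathcomp Require Import all_boot all_order all_algebra.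
Set Implicit Arguments. Unset Strict Implicit. Unset Printing Implicit Defensive.
Import Order.TTheory GRing.Theory Num.Theory.

(* Vertices of the sun S_n: inl i = x_i (cycle vertex), inr i = y_i (pendant). *)
Definition sun_vertex (n : nat) : finType := ('I_n + 'I_n)%type.

Definition cyc_adj (n : nat) (i j : 'I_n) : bool :=
  (val j == (val i).+1 %% n) || (val i == (val j).+1 %% n).

Definition sun_adj (n : nat) : rel (sun_vertex n) :=
  fun u v =>
    match u, v with
    | inl i, inl j => cyc_adj i j
    | inl i, inr j => i == j
    | inr i, inl j => i == j
    | inr _, inr _ => false
    end.

Definition vweight (V : finType) (e : rel V) (f : V -> nat) (x : V) : nat :=
  \sum_(y : V | e x y) f y.

Definition is_vlabeling (V : finType) (f : V -> nat) : Prop :=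
  injective f /\ (forall x, 0 < f x <= #|V|)%N.

Definition ad_distance_antimagic_labeling (V : finType) (e : rel V)
    (a d : int) (f : V -> nat) : Prop :=
  is_vlabeling f /\
  perm_eq [seq (Posz (vweight e f x)) | x <- enum V]
          [seq (a + (Posz k) * d)%R | k <- iota 0 #|V|].

Definition ad_distance_antimagic (V : finType) (e : rel V) (a d : int) : Prop :=
  exists f : V -> nat, ad_distance_antimagic_labeling e a d f.

From HB Require Import structures.
From mathcomp Require Import all_boot all_order all_algebra zify.
Import Order.TTheory GRing.Theory Num.Theory.
Set Implicit Arguments. Unset Strict Implicit.

(* The pendant vertex y_i has the single neighbour
   x_i, so its weight is f (x_i): the n cycle labels are themselves terms
   a + k_i d of the progression, with pairwise distinct indices k_i when d > 0.
   - Counting (sun_difference_ge3): the total weight equals the sum of the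
     progression, while every cycle label contributes to three weights; with
     lower bounds for sums of distinct naturals this forces d >= 3.
   - Spacing (sun_difference_lt3): n distinct terms of a progression with
     difference d >= 3 cannot all lie in [1, 2n] when n >= 3.
   The file first proves the general counting facts (sums of distinct naturals,
   injections into a window, the weight sum of an antimagic labeling of any
   graph), then the weight estimates for the sun, then the two arguments. *)

Lemma bin2_double n : ('C(n, 2) * 2 = n * n.-1)%N.
Proof. by rewrite mulnC -mul_bin_diag bin1 mulnC. Qed.

(* n distinct naturals sum to at least 0 + 1 + ... + (n - 1): remove the largest
   element, which is at least n - 1, and induct. *)
Lemma sumn_uniq_lb (s : seq nat) : uniq s -> ('C(size s, 2) <= sumn s)%N.
Proof.
move: {2}(size s) (erefl (size s)) => m; elim: m s => [|m IH] s size_s uniq_s.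
  by rewrite size_s.
have [x s_x m_le_x] : exists2 x, x \in s & (m <= x)%N.
  apply/hasP; apply: contraT; rewrite -all_predC => /allP small.
  suff : (size s <= size (iota 0 m))%N by rewrite size_iota size_s ltnn.
  by apply: uniq_leq_size => // y /small /=; rewrite -ltnNge mem_iota.
have size_rest : size (rem x s) = m by rewrite size_rem // size_s.
have := IH _ size_rest (rem_uniq x uniq_s).
by rewrite size_rest size_s binS bin1 (perm_sumn (perm_to_rem s_x)) /=; lia.
Qed.

Lemma sum_injective_lb (T : finType) (g : T -> nat) :
  injective g -> ('C(#|T|, 2) <= \sum_(x : T) g x)%N.
Proof.
move=> g_inj.
have uniq_g : uniq (map g (enum T)) by rewrite map_inj_uniq ?enum_uniq.
by have := sumn_uniq_lb uniq_g; rewrite size_map -cardT sumnE big_map big_enum.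
Qed.

Lemma card_injective_window (T : finType) (g : T -> nat) (m r : nat) :
  injective g -> (forall x, m <= g x < m + r)%N -> (#|T| <= r)%N.
Proof.
move=> g_inj g_win; rewrite cardT -(size_map g) -(size_iota m r).
apply: uniq_leq_size; first by rewrite map_inj_uniq ?enum_uniq.
by move=> _ /mapP [x _ ->]; rewrite mem_iota g_win.
Qed.

Lemma labeling_sum_lb (V : finType) (f : V -> nat) :
  is_vlabeling f -> ('C(#|V|.+1, 2) <= \sum_(x : V) f x)%N.
Proof.
move=> [f_inj f_range].
have pred_inj : injective (fun x => (f x).-1).
  by move=> x y /= eq_xy; apply: f_inj; have := f_range x; have := f_range y; lia.
have -> : (\sum_(x : V) f x = \sum_(x : V) ((f x).-1 + 1))%N.
  by apply: eq_bigr => x _; have := f_range x; lia.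
rewrite big_split /= sum_nat_const muln1 binS bin1 leq_add2r.
exact: sum_injective_lb pred_inj.
Qed.

Section AntimagicLabeling.
Variables (V : finType) (e : rel V) (a d : int) (f : V -> nat).
Hypothesis f_antimagic : ad_distance_antimagic_labeling e a d f.

Lemma antimagic_weight_form (x : V) :
  exists k : nat, Posz (vweight e f x) = (a + Posz k * d)%R.
Proof.
have [_ /perm_mem weights] := f_antimagic.
have : Posz (vweight e f x) \in [seq Posz (vweight e f y) | y <- enum V].
  by apply: map_f; rewrite mem_enum.
by rewrite weights => /mapP [k _ ->]; exists k.
Qed.

Lemma antimagic_weight_sum :
  Posz (\sum_(x : V) vweight e f x) = (a *+ #|V| + Posz 'C(#|V|, 2) * d)%R.
Proof.
have [_ perm_weights] := f_antimagic.
have := @perm_big _ +%R 0%R _ _ _ predT id perm_weights.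
rewrite (big_morph Posz PoszD (erefl 0%R)) big_map big_enum /= => ->.
rewrite big_map big_split /= -big_distrl /=.
have := sumr_const_nat #|V| 0 a.
by rewrite -bin2_sum (big_morph Posz PoszD (erefl 0%R)) /index_iota subn0 => ->.
Qed.
End AntimagicLabeling.

Lemma ordS_neq_ord_pred (n : nat) (i : 'I_n) : (2 < n)%N -> ordS i != ord_pred i.
Proof.
move=> n_gt2; apply/eqP => eq_Si_Pi.
have /(congr1 val) /= : ordS (ordS i) = i by rewrite eq_Si_Pi ord_predK.
rewrite -addn1 modnDml addn1 => mod_i.
have := divn_eq i.+2 n; rewrite mod_i; case: (i.+2 %/ n) => [|q]; nia.
Qed.

Section SunWeights.
Variables (n : nat) (f : sun_vertex n -> nat).

Lemma sun_pendant_weight (i : 'I_n) : vweight (@sun_adj n) f (inr i) = f (inl i).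
Proof.
rewrite /vweight big_sumType /= big_pred0_eq addn0.
by rewrite (big_pred1 i) // => j; rewrite /= eq_sym.
Qed.

Hypothesis n_gt2 : (2 < n)%N.

(* x_i sees the three distinct vertices x_(i+1), x_(i-1) and y_i. *)
Lemma sun_cycle_weight_lb (i : 'I_n) :
  (f (inl (ordS i)) + f (inl (ord_pred i)) + f (inr i)
     <= vweight (@sun_adj n) f (inl i))%N.
Proof.
have adj_S : sun_adj (inl i) (inl (ordS i)) by rewrite /= /cyc_adj eqxx.
have adj_P : sun_adj (inl i) (inl (ord_pred i)).
  by apply/orP; right; rewrite -[X in val X == _](ord_predK i).
have S_neq_P : (inl (ord_pred i) : sun_vertex n) != inl (ordS i).
  by rewrite (inj_eq inl_inj) eq_sym ordS_neq_ord_pred.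
rewrite /vweight (bigD1 (inl (ordS i))) // (bigD1 (inl (ord_pred i))) /=; last first.
  exact/andP.
by rewrite (bigD1 (inr i)) /= ?eqxx // !addnA leq_addr.
Qed.

(* Summing: every cycle label is counted three times (twice from the cycle,
   once from its pendant) and every pendant label once. *)
Lemma sun_weight_sum_lb :
  (3 * \sum_(i < n) f (inl i) + \sum_(i < n) f (inr i)
     <= \sum_(v : sun_vertex n) vweight (@sun_adj n) f v)%N.
Proof.
have sum_pendant : (\sum_(i < n) vweight (@sun_adj n) f (inr i) = \sum_(i < n) f (inl i))%N.
  by apply: eq_bigr => i _; exact: sun_pendant_weight.
have sum_S : (\sum_(i < n) f (inl (ordS i)) = \sum_(i < n) f (inl i))%N.
  by rewrite [RHS](reindex_inj (@ordS_inj n)).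
have sum_P : (\sum_(i < n) f (inl (ord_pred i)) = \sum_(i < n) f (inl i))%N.
  by rewrite [RHS](reindex_inj (@ord_pred_inj n)).
have cycle_lb : (\sum_(i < n) (f (inl (ordS i)) + f (inl (ord_pred i)) + f (inr i))
                   <= \sum_(i < n) vweight (@sun_adj n) f (inl i))%N.
  by apply: leq_sum => i _; exact: sun_cycle_weight_lb.
rewrite !big_split /= sum_S sum_P in cycle_lb.
rewrite big_sumType /= sum_pendant.
set X := (\sum_(i < n) f (inl i))%N in cycle_lb *; lia.
Qed.
End SunWeights.

(* The arithmetic core of the counting argument: 2 'C(n, 2) d bounds from below
   the contribution of n distinct progression indices, 'C(2n + 1, 2) the sum
   of 2n distinct positive labels; these fit under the progression sum
   'C(2n, 2) d only if n d >= 2n + 1, i.e. d >= 3. *)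
Lemma counting_bound (n d : nat) : (0 < n)%N ->
  ('C(n, 2) * 2 * d + 'C((n + n).+1, 2) <= 'C(n + n, 2) * d)%N -> (2 < d)%N.
Proof.
case: n => [// | m] _; rewrite bin2_double [X in _ + X]binS bin1.
have := bin2_double (m.+1 + m.+1); rewrite addnS /=.
move: ('C(_, 2)) => C2n double_C2n bound.
have nd_large : (m.+1 * (m.+1 + m.+1).+1 <= m.+1 * m.+1 * d)%N by nia.
nia.
Qed.

Section SunAntimagic.
Variables (n : nat) (a : int) (d : nat) (f : sun_vertex n -> nat) (k : 'I_n -> nat).
Hypothesis n_gt2 : (2 < n)%N.
Hypothesis f_antimagic : ad_distance_antimagic_labeling (@sun_adj n) a (Posz d) f.
Hypothesis cycle_labels : forall i : 'I_n, Posz (f (inl i)) = (a + Posz (k i) * Posz d)%R.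

Lemma cycle_index_inj : (0 < d)%N -> injective k.
Proof.
move=> d_gt0 i j eq_k.
have [[f_inj _] _] := f_antimagic.
apply: inl_inj (f_inj _ _ _).
by apply/eqP; rewrite -eqz_nat !cycle_labels eq_k.
Qed.

(* Counting argument: the weight sum is at least 3X + Y, where X and Y are the
   sums of the cycle and pendant labels; X is a sum of n distinct terms of the
   progression and X + Y >= 1 + ... + 2n. Comparing with the sum of the
   progression gives n d >= 2n + 1, hence d >= 3. *)
Lemma sun_difference_ge3 : (3 <= d)%N.
Proof.
have card_V : #|sun_vertex n| = (n + n)%N by rewrite card_sum card_ord.
have [f_label _] := f_antimagic.
have weight_sum := antimagic_weight_sum f_antimagic.
have weight_lb := sun_weight_sum_lb f n_gt2.
have label_sum := labeling_sum_lb f_label.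
rewrite card_V in weight_sum label_sum.
rewrite big_sumType /= in label_sum.
set W := (\sum_(v : sun_vertex n) _)%N in weight_sum weight_lb.
set X := (\sum_(i < n) f (inl i))%N in weight_lb label_sum.
set Y := (\sum_(i < n) f (inr i))%N in weight_lb label_sum.
set K := (\sum_(i < n) k i)%N.
have X_form : Posz X = (a *+ n + Posz K * Posz d)%R.
  rewrite /X /K !(big_morph Posz PoszD (erefl 0%R)) /=.
  rewrite (eq_bigr _ (fun i _ => cycle_labels i)) big_split /= sumr_const card_ord.
  by rewrite big_distrl.
have K_lb : (0 < d -> 'C(n, 2) <= K)%N.
  by move=> d_gt0; have := sum_injective_lb (cycle_index_inj d_gt0); rewrite card_ord.
(* W = 2n a + 'C(2n, 2) d and W >= 2X + (X + Y) with X = n a + K d: a cancels. *)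
have key : (2 * K * d + (X + Y) <= 'C(n + n, 2) * d)%N.
  have : (Posz (2 * K * d + (X + Y)) <= Posz ('C(n + n, 2) * d))%R.
    rewrite !PoszD !PoszM; lia.
  by rewrite lez_nat.
have K_lb2 : ('C(n, 2) * 2 * d <= 2 * K * d)%N.
  case: (posnP d) => [-> | /K_lb C_le_K]; first by rewrite !muln0.
  by rewrite leq_mul2r mulnC leq_mul2l C_le_K !orbT.
by apply: (counting_bound (n := n)); lia.
Qed.

(* Spacing argument: the n cycle labels are pairwise at distance a multiple of
   d >= 3 and lie in [1, 2n]; so their indices fit in a window of n - 1
   consecutive integers, which is impossible for n distinct indices. *)
Lemma sun_difference_lt3 : (d < 3)%N.
Proof.
rewrite ltnNge; apply/negP => d_ge3.
have [[_ f_range] _] := f_antimagic.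
have card_V : #|sun_vertex n| = (n + n)%N by rewrite card_sum card_ord.
have k_inj : injective k by apply: cycle_index_inj; lia.
have n_gt0 : (0 < n)%N by lia.
have [i0 _ k_min] := arg_minnP k (isT : xpredT (Ordinal n_gt0)).
have window : forall i, (k i0 <= k i < k i0 + n.-1)%N.
  move=> i; have k_ge := k_min i isT.
  have := f_range (inl i); have := f_range (inl i0); rewrite card_V.
  have diff : f (inl i) = (f (inl i0) + (k i - k i0) * d)%N.
    apply/eqP; rewrite -eqz_nat PoszD mulnBl -subzn ?leq_mul2r ?k_ge ?orbT //.
    by rewrite !PoszM !cycle_labels; apply/eqP; lia.
  have : (3 * (k i - k i0) <= (k i - k i0) * d)%N by rewrite mulnC leq_mul2l d_ge3 orbT.
  lia.
by have := card_injective_window k_inj window; rewrite card_ord; lia.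
Qed.
End SunAntimagic.

(* The pendant weights make the cycle labels terms of the progression; then the
   counting and spacing arguments contradict each other. *)
Theorem mainTheorem7 (n : nat) (hn : (3 <= n)%N) (a d : int) (hd : (0 <= d)%R) :
  ~ ad_distance_antimagic (@sun_adj n) a d.
Proof.
case: d hd => [d _ | //] [f f_antimagic].
have /fin_all_exists [k cycle_labels] :
    forall i : 'I_n, exists k : nat, Posz (f (inl i)) = (a + Posz k * Posz d)%R.
  by move=> i; rewrite -sun_pendant_weight; exact: antimagic_weight_form.
have := sun_difference_ge3 hn f_antimagic cycle_labels.
by rewrite leqNgt (sun_difference_lt3 hn f_antimagic cycle_labels).
Qed.
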